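(* For every graph $G$, $\operatorname{box}(G)\le \min\{2\,MED(G)+2,\ MED(\overline{G})\}$, where $\overline{G}$ is the complement of $G$.
   Context: A dominating edge set of a graph $H$ is a set $D$ of edges such that every edge of $H$ not in $D$ shares an endpoint with some edge of $D$; $MED(H)$ is the minimum cardinality of a dominating edge set of $H$. The boxicity $\operatorname{box}(G)$ is the minimum $b$ such that $G$ is the intersection graph of axis-parallel boxes in $\mathbb{R}^b$ (products of $b$ closed intervals), one box per vertex. *)

From mathcomp Require Import all_boot all_order all_algebra.
From mathcomp Require Import reals.
Set Implicit Arguments. Unset Strict Implicit. Unset Printing Implicit Defensive.
Import Order.TTheory GRing.Theory Num.Theory.

Definition simple_graph (T : finType) (e : rel T) :=
  symmetric e /\ irreflexive e.

Definition compl_graph (T : finType) (e : rel T) : rel T :=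
  fun x y => (x != y) && ~~ e x y.

Definition edges (T : finType) (e : rel T) : {set {set T}} :=
  [set E : {set T} | [exists x, exists y, e x y && (E == [set x; y])]].

Definition share_endpoint (T : finType) (E F : {set T}) : bool :=
  ~~ [disjoint E & F].

Definition dominating_edge_set (T : finType) (e : rel T) (D : {set {set T}}) : bool :=
  (D \subset edges e) &&
  [forall F in edges e, (F \in D) || [exists E in D, share_endpoint E F]].

(* MED(H): minimum cardinality of a dominating edge set
   (the full edge set is dominating, so the default value is attained). *)
Definition MED (T : finType) (e : rel T) : nat :=
  \big[minn/#|edges e|]_(D : {set {set T}} | dominating_edge_set e D) #|D|.

(* Box representation in R^b: vertex x gets the box
   prod_{i < b} [lo x i, hi x i] (closed, nonempty intervals), and distinct
   vertices are adjacent iff their boxes intersect. *)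
Definition box_rep (R : realType) (T : finType) (e : rel T) (b : nat) : Prop :=
  exists (lo hi : T -> 'I_b -> R),
    (forall x i, (lo x i <= hi x i)%R) /\
    (forall x y, x != y ->
       (e x y <-> forall i, ((lo x i <= hi y i)%R && (lo y i <= hi x i)%R))).

(* box(G) <= k, i.e. the minimum dimension b admitting a box representation
   is at most k; equivalently some b <= k admits a box representation. *)
Definition boxicity_le (R : realType) (T : finType) (e : rel T) (k : nat) : Prop :=
  exists b, (b <= k)%N /\ box_rep R e b.

From mathcomp Require Import all_boot all_order all_algebra.
From mathcomp Require Import reals.
Import Num.Theory.

(* A box representation in dimension b is the same as b interval supergraphs
   of G such that every non-edge of G is a non-edge of one of them.
   If D dominates the edges of the complement, each non-edge uv in D yields
   such an interval graph that misses every non-edge at u or at v: put u at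
   the left end, v at the right end, and let every other vertex stretch towards
   whichever of u, v it is adjacent to.  Since D is dominating, every non-edge
   of G is missed.
   If D dominates the edges of G, its vertex set S is a vertex cover with at
   most 2|D| vertices.  One star-shaped interval graph per s in S misses the
   non-edges at s; one more, giving each vertex of S the whole range and each
   other vertex its own point, misses the non-edges outside S. *)

Set Implicit Arguments. Unset Strict Implicit. Unset Printing Implicit Defensive.

(* A pair (lo, hi) stands for the closed integer interval [lo, hi]. *)
Definition intervals_meet (p q : nat * nat) := (p.1 <= q.2) && (q.1 <= p.2).

Lemma intervals_meetC p q : intervals_meet p q = intervals_meet q p.
Proof. by rewrite /intervals_meet andbC. Qed.

Section IntervalFamilies.

Variables (T : finType) (e : rel T).

Definition interval_supergraph (f : T -> nat * nat) :=
  (forall x, (f x).1 <= (f x).2) /\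
  (forall x y, e x y -> intervals_meet (f x) (f y)).

Lemma box_rep_of_interval_family (R : realType) (I : finType)
    (f : I -> T -> nat * nat) :
  (forall i, interval_supergraph (f i)) ->
  (forall x y, x != y -> ~~ e x y ->
     exists i, ~~ intervals_meet (f i x) (f i y)) ->
  box_rep R e #|I|.
Proof.
move=> super sep.
exists (fun x k => ((f (enum_val k) x).1%:R)%R), (fun x k => ((f (enum_val k) x).2%:R)%R).
split=> [x k|x y xy]; first by rewrite ler_nat; case: (super (enum_val k)).
split=> [exy k|meet_all].
  by rewrite !ler_nat; case: (super (enum_val k)) => _; apply.
apply/negPn/negP => nexy; have [i /negP] := sep x y xy nexy; apply.
by have := meet_all (enum_rank i); rewrite !ler_nat enum_rankK.
Qed.

End IntervalFamilies.

Section Domination.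

Variables (T : finType) (e : rel T).

Lemma MED_attained : exists2 D, dominating_edge_set e D & #|D| = MED e.
Proof.
rewrite /MED; apply: (big_ind (fun m => exists2 D, dominating_edge_set e D & #|D| = m)).
- exists (edges e) => //; apply/andP; split => //.
  by apply/forall_inP => F ->.
- by move=> m n [D1 ? <-] [D2 ? <-]; case: leqP => _; [exists D1 | exists D2].
- by move=> D domD; exists D.
Qed.

Lemma edges_pair E :
  E \in edges e -> exists p : T * T, e p.1 p.2 && (E == [set p.1; p.2]).
Proof. by rewrite inE => /existsP [x /existsP [y exy]]; exists (x, y). Qed.

Lemma edges_card E : E \in edges e -> #|E| <= 2.
Proof.
by case/edges_pair => -[x y] /andP [_ /eqP ->]; rewrite cards2; case: (x != y).
Qed.

Variable D : {set {set T}}.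
Hypothesis domD : dominating_edge_set e D.

Lemma dominating_edge_set_sub : D \subset edges e.
Proof. by case/andP: domD. Qed.

Lemma dominating_edge_set_touches x y : e x y ->
  exists2 E, E \in D & (x \in E) || (y \in E).
Proof.
move=> exy; have Fxy : [set x; y] \in edges e.
  by rewrite inE; apply/existsP; exists x; apply/existsP; exists y; rewrite exy eqxx.
case/andP: domD => _ /forall_inP /(_ _ Fxy) /orP [FD | /exists_inP [E ED]].
  by exists [set x; y]; rewrite ?set21.
case/pred0Pn => z /andP [/= zE zxy]; exists E => //.
by case/set2P: zxy zE => -> ->; rewrite ?orbT.
Qed.

Lemma card_cover_dominating_edge_set : #|cover D| <= 2 * #|D|.
Proof.
rewrite (leq_trans (leq_card_cover D)) // mulnC -sum_nat_const.
by apply: leq_sum => E ED; apply: edges_card; apply: (subsetP dominating_edge_set_sub).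
Qed.

Lemma vertex_cover_dominating_edge_set x y : e x y -> (x \in cover D) || (y \in cover D).
Proof.
case/dominating_edge_set_touches => E ED /orP [xE | yE]; apply/orP.
  by left; apply/bigcupP; exists E.
by right; apply/bigcupP; exists E.
Qed.

End Domination.

Section IntervalModels.

Variables (T : finType) (e : rel T).
Hypotheses (e_sym : symmetric e) (e_irr : irreflexive e).

Lemma neq_of_adj x y : e x y -> x != y.
Proof. by apply: contraTneq => ->; rewrite e_irr. Qed.

Section NonEdgeIntervals.

Variables u v : T.
Hypotheses (uv : u != v) (nuv : ~~ e u v).

Definition nonedge_intervals (w : T) : nat * nat :=
  if w == u then (0, 0) else if w == v then (3, 3)
  else (if e w u then 0 else 1, if e w v then 3 else 2).

Local Notation f := nonedge_intervals.

Lemma nonedge_intervals_u : f u = (0, 0).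
Proof. by rewrite /f eqxx. Qed.

Lemma nonedge_intervals_v : f v = (3, 3).
Proof. by rewrite /f eqxx eq_sym (negbTE uv). Qed.

Lemma nonedge_intervals_mid w : w != u -> w != v ->
  f w = (if e w u then 0 else 1, if e w v then 3 else 2).
Proof. by rewrite /f => /negbTE -> /negbTE ->. Qed.

Lemma nonedge_intervals_meet_u y : y != u ->
  intervals_meet (f u) (f y) = e u y.
Proof.
move=> yu; rewrite nonedge_intervals_u.
have [->|yv] := eqVneq y v; first by rewrite nonedge_intervals_v (negbTE nuv).
by rewrite nonedge_intervals_mid // (e_sym y u); case: (e u y); case: (e y v).
Qed.

Lemma nonedge_intervals_meet_v y : y != v ->
  intervals_meet (f v) (f y) = e v y.
Proof.
have nvu : ~~ e v u by rewrite e_sym.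
move=> yv; rewrite nonedge_intervals_v.
have [->|yu] := eqVneq y u; first by rewrite nonedge_intervals_u (negbTE nvu).
by rewrite nonedge_intervals_mid // (e_sym y v); case: (e v y); case: (e y u).
Qed.

Lemma nonedge_intervals_meet_mid x y : x \notin [set u; v] -> y \notin [set u; v] ->
  intervals_meet (f x) (f y).
Proof.
rewrite !inE !negb_or => /andP [xu xv] /andP [yu yv].
rewrite !nonedge_intervals_mid //.
by case: (e x u); case: (e x v); case: (e y u); case: (e y v).
Qed.

Lemma nonedge_intervals_meet x y : x != y ->
  intervals_meet (f x) (f y) = e x y || (x \notin [set u; v]) && (y \notin [set u; v]).
Proof.
wlog: x y / (x \in [set u; v]) || (y \notin [set u; v]).
  move=> gen xy; have [|] := boolP ((x \in [set u; v]) || (y \notin [set u; v])).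
    by move/gen; apply.
  rewrite negb_or negbK => /andP [xn yin].
  by rewrite intervals_meetC e_sym andbC gen ?yin // eq_sym.
move=> cases xy; have [xuv|xn] := boolP (x \in [set u; v]).
  case/set2P: xuv xy => -> xy.
  - by rewrite nonedge_intervals_meet_u /= ?orbF // eq_sym.
  - by rewrite nonedge_intervals_meet_v /= ?orbF // eq_sym.
have yn : y \notin [set u; v] by rewrite (negbTE xn) in cases.
by rewrite nonedge_intervals_meet_mid // yn orbT.
Qed.

Lemma nonedge_intervals_supergraph : interval_supergraph e f.
Proof.
split=> [w | x y exy]; last by rewrite nonedge_intervals_meet ?exy ?neq_of_adj.
by rewrite /f; do 2 case: ifP => //; case: (e w u); case: (e w v).
Qed.

Lemma nonedge_intervals_separate x y : x \in [set u; v] -> x != y -> ~~ e x y ->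
  ~~ intervals_meet (f x) (f y).
Proof. by move=> xuv xy /negbTE nexy; rewrite nonedge_intervals_meet // nexy xuv. Qed.

End NonEdgeIntervals.

Definition star_intervals (s w : T) : nat * nat :=
  if w == s then (0, 0) else if e w s then (0, 1) else (1, 1).

Lemma star_intervals_supergraph s : interval_supergraph e (star_intervals s).
Proof.
have meet_s y : e s y -> intervals_meet (star_intervals s s) (star_intervals s y).
  by move=> esy; rewrite /star_intervals eqxx eq_sym (negbTE (neq_of_adj esy)) e_sym esy.
split=> [w | x y exy]; first by rewrite /star_intervals; case: (w == s); case: (e w s).
case: (eqVneq x s) exy => [-> | xs] exy; first exact: meet_s.
case: (eqVneq y s) exy => [-> | ys] exy; first by rewrite intervals_meetC meet_s // e_sym.
by rewrite /star_intervals (negbTE xs) (negbTE ys); case: (e x s); case: (e y s).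
Qed.

Lemma star_intervals_separate s y : y != s -> ~~ e s y ->
  ~~ intervals_meet (star_intervals s s) (star_intervals s y).
Proof.
by move=> ys nesy; rewrite /star_intervals eqxx (negbTE ys) e_sym (negbTE nesy).
Qed.

Definition cover_intervals (S : {set T}) (w : T) : nat * nat :=
  if w \in S then (0, #|T|) else (enum_rank w : nat, enum_rank w : nat).

Lemma cover_intervals_supergraph (S : {set T}) :
  (forall x y, e x y -> (x \in S) || (y \in S)) ->
  interval_supergraph e (cover_intervals S).
Proof.
have lo_small w : (cover_intervals S w).1 <= #|T|.
  by rewrite /cover_intervals; case: ifP => //= _; apply: ltnW.
have meet_S x y : x \in S -> intervals_meet (cover_intervals S x) (cover_intervals S y).
  move=> xS; have -> : cover_intervals S x = (0, #|T|) by rewrite /cover_intervals xS.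
  by rewrite /intervals_meet lo_small.
move=> Scover; split=> [w | x y /Scover /orP [xS | yS]].
- by rewrite /cover_intervals; case: ifP.
- exact: meet_S.
- by rewrite intervals_meetC meet_S.
Qed.

Lemma cover_intervals_separate (S : {set T}) x y : x \notin S -> y \notin S -> x != y ->
  ~~ intervals_meet (cover_intervals S x) (cover_intervals S y).
Proof.
move=> xS yS; apply: contra => meet_xy.
rewrite /intervals_meet /cover_intervals (negbTE xS) (negbTE yS) /= -eqn_leq in meet_xy.
by apply/eqP/enum_rank_inj/val_inj/eqP.
Qed.

End IntervalModels.

Section BoxicityBounds.

Variables (R : realType) (T : finType) (e : rel T).

Lemma boxicity_le_minn m n :
  boxicity_le R e m -> boxicity_le R e n -> boxicity_le R e (minn m n).
Proof.
by move=> [b ?] [c ?]; case: leqP => _; [exists b | exists c].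
Qed.

Hypotheses (e_sym : symmetric e) (e_irr : irreflexive e).

Section ComplementDomination.

Variable D : {set {set T}}.
Hypothesis domD : dominating_edge_set (compl_graph e) D.

Definition nonedge_ends (E : {E | E \in D}) : T * T :=
  xchoose (edges_pair (subsetP (dominating_edge_set_sub domD) _ (valP E))).

Lemma nonedge_endsP E :
  compl_graph e (nonedge_ends E).1 (nonedge_ends E).2 &&
  (val E == [set (nonedge_ends E).1; (nonedge_ends E).2]).
Proof. exact: (xchooseP (edges_pair _)). Qed.

Lemma box_rep_compl_dominating : box_rep R e #|D|.
Proof.
have -> : #|D| = #|{: {E | E \in D}}| by rewrite card_sig.
apply: (box_rep_of_interval_family R
  (f := fun E : {E | E \in D} =>
          nonedge_intervals e (nonedge_ends E).1 (nonedge_ends E).2)).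
  move=> E; case/andP: (nonedge_endsP E) => /andP [uv nuv] _.
  exact: nonedge_intervals_supergraph.
move=> x y xy nexy.
have [E ED xyE] : exists2 E, E \in D & (x \in E) || (y \in E).
  by apply: (dominating_edge_set_touches domD); rewrite /compl_graph xy nexy.
exists (exist _ E ED).
case/andP: (nonedge_endsP (exist _ E ED)) => /andP [uv nuv] /eqP /= Euv.
rewrite Euv in xyE; case/orP: xyE => [xuv | yuv].
  exact: nonedge_intervals_separate.
by rewrite intervals_meetC nonedge_intervals_separate // 1?eq_sym // e_sym.
Qed.

End ComplementDomination.

Lemma box_rep_dominating D : dominating_edge_set e D -> box_rep R e #|cover D|.+1.
Proof.
move=> domD; set S := cover D.
have -> : #|S|.+1 = #|{: option {x | x \in S}}| by rewrite card_option card_sig.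
apply: (box_rep_of_interval_family R
  (f := fun o : option {x | x \in S} =>
          if o is Some s then star_intervals e (val s) else cover_intervals S)).
  case=> [s|]; first exact: star_intervals_supergraph.
  exact/cover_intervals_supergraph/vertex_cover_dominating_edge_set.
move=> x y xy nexy.
have [xS | xS] := boolP (x \in S).
  by exists (Some (exist _ x xS)); apply: star_intervals_separate; rewrite // eq_sym.
have [yS | yS] := boolP (y \in S).
  exists (Some (exist _ y yS)).
  by rewrite intervals_meetC; apply: star_intervals_separate; rewrite // e_sym.
by exists None; apply: cover_intervals_separate.
Qed.

Lemma boxicity_le_MED_compl : boxicity_le R e (MED (compl_graph e)).
Proof.
have [D domD <-] := MED_attained (compl_graph e).
by exists #|D|; split; last exact: box_rep_compl_dominating.
Qed.

Lemma boxicity_le_MED : boxicity_le R e (2 * MED e + 2).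
Proof.
have [D domD <-] := MED_attained e.
exists #|cover D|.+1; split; last exact: box_rep_dominating.
by rewrite addn2 ltnS leqW // (card_cover_dominating_edge_set domD).
Qed.

End BoxicityBounds.

Theorem theorem17 (R : realType) (T : finType) (e : rel T) :
  simple_graph e ->
  boxicity_le R e (minn (2 * MED e + 2) (MED (compl_graph e))).
Proof.
case=> e_sym e_irr.
by apply: boxicity_le_minn; [apply: boxicity_le_MED | apply: boxicity_le_MED_compl].
Qed.
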